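(* Let $n\ge 3$. For the power graph $P(G(n))$ of the gyrogroup $G(n)$ (defined in the context), $$dis(P(G(n)),i)=\begin{cases}2^n, & i=0,\\ \dfrac{2^{n-1}(2^{n-1}+1)}{2}, & i=1,\\ \dfrac{3\cdot 2^{n-1}(2^{n-1}-1)}{2}, & i=2.\end{cases}$$
   Context: Let $n\ge 3$ be an integer and $m=2^{n-1}$. Let $P(n)=\{0,1,\dots,m-1\}$, $H(n)=\{m,m+1,\dots,2^n-1\}$ and $G(n)=P(n)\cup H(n)$. For $i,j\in G(n)$ let $t,s,k\in P(n)$ be the residues modulo $m$ (taken in $\{0,\dots,m-1\}$) of $i+j$, $i+(\frac m2-1)j$ and $(\frac m2+1)i+(\frac m2-1)j$, respectively, and define $i\oplus j=t$ if $i,j\in P(n)$; $i\oplus j=t+m$ if $i\in P(n),j\in H(n)$; $i\oplus j=s+m$ if $i\in H(n),j\in P(n)$; $i\oplus j=k$ if $i,j\in H(n)$. Then $(G(n),\oplus)$ is a gyrogroup with identity $e=0$. Powers are defined by $a^1=a$, $a^{k+1}=a^k\oplus a$. The power graph $P(G(n))$ is the simple undirected graph with vertex set $G(n)$ in which distinct vertices $u,v$ are adjacent if and only if $u^k=v$ or $v^k=u$ for some positive integer $k$. For a connected graph $G$ with distance function $d$, $dis(G,i)$ denotes the number of unordered pairs $\{u,v\}$ of vertices (with $u=v$ allowed) such that $d(u,v)=i$. *)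

From mathcomp Require Import all_boot.
From mathcomp Require Import boolp.
Set Implicit Arguments. Unset Strict Implicit. Unset Printing Implicit Defensive.

(* m = 2^(n-1); elements of G(n) are the naturals 0 .. 2^n - 1. *)
Definition gm (n : nat) : nat := 2 ^ n.-1.

Definition gop (n i j : nat) : nat :=
  let m := gm n in
  let t := (i + j) %% m in
  let s := (i + (m %/ 2 - 1) * j) %% m in
  let k := ((m %/ 2 + 1) * i + (m %/ 2 - 1) * j) %% m in
  if i < m then (if j < m then t else t + m)
  else (if j < m then s + m else k).

Fixpoint gpow (n a k : nat) : nat :=
  match k with
  | 0 => 0
  | 1 => a
  | k'.+1 => gop n (gpow n a k') a
  end.

Notation vtx n := ('I_(2 ^ n)).

Definition padj (n : nat) (u v : vtx n) : Prop :=
  u <> v /\ exists k, 0 < k /\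
    (gpow n (val u) k = val v \/ gpow n (val v) k = val u).

Fixpoint pwalk (n : nat) (k : nat) (u v : vtx n) : Prop :=
  match k with
  | 0 => u = v
  | k'.+1 => exists w, padj u w /\ pwalk k' w v
  end.

Definition pdist_eq (n : nat) (u v : vtx n) (i : nat) : Prop :=
  pwalk i u v /\ forall j, j < i -> ~ pwalk j u v.

(* dis(P(G(n)), i): number of unordered pairs {u,v} (u = v allowed)
   with d(u,v) = i; an unordered pair is represented by (u,v) with u <= v. *)
Definition dis (n i : nat) : nat :=
  #|[set p : vtx n * vtx n | (val p.1 <= val p.2) && `[< pdist_eq p.1 p.2 i >]]|.

From mathcomp Require Import all_boot.
From mathcomp Require Import boolp.
From mathcomp Require Import zify.

Set Implicit Arguments.
Unset Strict Implicit.
Unset Printing Implicit Defensive.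

(* On P(n) the operation is addition modulo m = 2^(n-1), so P(n) is a cyclic
   group of 2-power order; its subgroups form a chain, hence of any two
   elements of P(n) one is a power of the other.  An element h of H(n) has
   powers h, 0, h, 0, ...  So the power graph is the complete graph on P(n)
   plus the edges joining 0 to H(n).  As 0 is adjacent to every other vertex,
   the distance is 2 exactly for distinct non-adjacent pairs, and counting
   gives dis(1) = C(m,2) + m and dis(2) = m(m-1) + C(m,2). *)

Lemma exists_mul_modn_eq m a b : 0 < m -> b < m -> gcdn a m %| b ->
  exists k, 0 < k /\ k * a %% m = b.
Proof.
move=> m_gt0 b_lt_m dvd_b.
have [a0|a_gt0] := posnP a.
  move: dvd_b; rewrite a0 gcd0n; have [-> _|b_gt0 /(dvdn_leq b_gt0)] := posnP b.
    by exists 1; rewrite mod0n.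
  by rewrite leqNgt b_lt_m.
have [q def_b] : exists q, b = q * gcdn a m by exists (b %/ gcdn a m); rewrite divnK.
case: (egcdnP m a_gt0) => ka km def_ka _.
exists (ka * q + m); split; first by lia.
have -> : (ka * q + m) * a = (q * km + a) * m + b by rewrite def_b; nia.
by rewrite modnMDl modn_small.
Qed.

Lemma dvdn_pfactor_total p e d1 d2 : prime p ->
  d1 %| p ^ e -> d2 %| p ^ e -> (d1 %| d2) || (d2 %| d1).
Proof.
move=> p_pr /(dvdn_pfactor _ _ p_pr) [x _ ->] /(dvdn_pfactor _ _ p_pr) [y _ ->].
by rewrite !dvdn_Pexp2l ?prime_gt1 ?leq_total.
Qed.

Lemma pfactor_mul_modn_chain p e a b : prime p -> a < p ^ e -> b < p ^ e ->
  exists k, 0 < k /\ (k * a %% p ^ e = b \/ k * b %% p ^ e = a).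
Proof.
move=> p_pr a_lt b_lt; have pe_gt0 : 0 < p ^ e by rewrite expn_gt0 prime_gt0.
case/orP: (dvdn_pfactor_total p_pr (dvdn_gcdr a (p ^ e)) (dvdn_gcdr b (p ^ e))).
  move=> /dvdn_trans/(_ (dvdn_gcdl b _)) /(exists_mul_modn_eq pe_gt0 b_lt) [k [k_gt0 <-]].
  by exists k; split; [|left].
move=> /dvdn_trans/(_ (dvdn_gcdl a _)) /(exists_mul_modn_eq pe_gt0 a_lt) [k [k_gt0 <-]].
by exists k; split; [|right].
Qed.

Definition row_count N (Q : rel nat) (j : nat) : nat :=
  \sum_(i < N) ((i <= j) && Q i j).

Lemma card_le_pairs N (Q : rel nat) :
  #|[set p : 'I_N * 'I_N | (p.1 <= p.2) && Q p.1 p.2]| =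
  \sum_(j < N) row_count N Q j.
Proof.
rewrite (exchange_big _ _ (index_enum _)) /= pair_big /=.
by rewrite -sum1_card big_mkcond /=; apply: eq_bigr => p _; rewrite inE; case: ifP.
Qed.

Lemma sum_ord_interval N a b : \sum_(i < N) ((a <= i) && (i < b)) = minn b N - a.
Proof. by elim: N => [|N IH]; rewrite ?big_ord0 ?big_ord_recr /= ?IH; lia. Qed.

Section PowerGraph.

Variable n : nat.

Lemma padj_sym (u v : vtx n) : padj u v -> padj v u.
Proof.
move=> [neq_uv [k [k_gt0 pw]]]; split; first by move/esym.
by exists k; split; [|tauto].
Qed.

Lemma pwalk1 (u v : vtx n) : pwalk 1 u v <-> padj u v.
Proof. by split; [move=> [w [uw <-]]|exists v]. Qed.

Lemma pdist_eq0 (u v : vtx n) : pdist_eq u v 0 <-> u = v.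
Proof. by split; [case|]. Qed.

Lemma pdist_eq1 (u v : vtx n) : pdist_eq u v 1 <-> padj u v.
Proof.
split; first by case=> /pwalk1.
by move=> uv; split; [exact/pwalk1|case=> // _ /= eq_uv; case: uv].
Qed.

Lemma pdist_eq2_universal (w u v : vtx n) :
  (forall x, x <> w -> padj w x) ->
  pdist_eq u v 2 <-> u <> v /\ ~ padj u v.
Proof.
move=> w_univ; split.
  by move=> [_ no_walk]; split; [exact: (no_walk 0)|move/pwalk1; exact: no_walk].
move=> [neq_uv nadj_uv]; split; last first.
  by case=> [_ //|[_ /pwalk1 //|//]].
have adj_w x y : x <> y -> ~ padj x y -> padj w x.
  move=> neq_xy nadj_xy; apply: (w_univ) => x_w; apply: nadj_xy.
  by rewrite x_w; apply: (w_univ) => y_w; apply: neq_xy; rewrite x_w y_w.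
exists w; split; first exact/padj_sym/(adj_w u v).
exists v; split => //; apply: (adj_w v u) => [vu|/padj_sym //].
exact: neq_uv.
Qed.

Lemma dis_sum i (Q : rel nat) : (forall u v : vtx n, pdist_eq u v i <-> Q u v) ->
  dis n i = \sum_(j < 2 ^ n) row_count (2 ^ n) Q j.
Proof.
move=> distQ; rewrite /dis -card_le_pairs; apply: eq_card => p.
by rewrite !inE; congr (_ && _); apply/asboolP/idP => /distQ.
Qed.

Lemma dis0 : dis n 0 = 2 ^ n.
Proof.
rewrite (@dis_sum 0 eq_op) => [|u v]; last first.
  by rewrite pdist_eq0; split => [->|/eqP /val_inj].
rewrite -[RHS]muln1 -[2 ^ n in RHS]card_ord -sum_nat_const; apply: eq_bigr => j _.
rewrite /row_count (eq_bigr (fun i : 'I_(2 ^ n) => ((j <= i) && (i < j.+1) : nat))).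
  by rewrite sum_ord_interval; have := ltn_ord j; lia.
by move=> i _; lia.
Qed.

Hypothesis n_gt1 : 1 < n.

Let m := gm n.

Lemma gm_gt0 : 0 < m.
Proof. exact: expn_gt0. Qed.

Lemma gmE : m = 2 ^ n.-2 * 2.
Proof. by rewrite /m /gm -expnSr; case: n n_gt1 => [|[|k]]. Qed.

Lemma card_vtx : 2 ^ n = m + m.
Proof. by rewrite /m /gm addnn -mul2n -expnS; case: n n_gt1. Qed.

Lemma gpowSS a k : gpow n a k.+2 = gop n (gpow n a k.+1) a.
Proof. by []. Qed.

Lemma gpow_lt_m a k : a < m -> gpow n a k = k * a %% m.
Proof.
move=> a_lt_m; case: k => [|k]; first by rewrite mod0n.
elim: k => [|k IH]; first by rewrite mul1n modn_small.
rewrite gpowSS IH /gop -/m ltn_pmod ?gm_gt0 // a_lt_m.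
by rewrite modnDml mulSn addnC.
Qed.

Lemma gpow_ge_m a k : m <= a < m + m -> gpow n a k = if odd k then a else 0.
Proof.
move=> /andP [m_le_a a_lt_2m]; case: k => [|k] //.
elim: k => [|k IH] //; rewrite gpowSS IH /gop -/m /=.
have [_|_] := boolP (odd k) => /=.
  rewrite gm_gt0 ltnNge m_le_a /= -[a in a %% m](subnK m_le_a) modnDr.
  by rewrite modn_small ?subnK //; lia.
(* on H(n), a (+) a = ((m/2 + 1) + (m/2 - 1)) a mod m = 0 *)
rewrite ltnNge m_le_a /= -mulnDl gmE mulnK //.
have -> : 2 ^ n.-2 + 1 + (2 ^ n.-2 - 1) = 2 ^ n.-2 * 2.
  by have := expn_gt0 2 n.-2; lia.
by rewrite modnMr.
Qed.

Lemma gpow_double_m a : a < m + m -> gpow n a (m + m) = 0.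
Proof.
move=> a_lt_2m; have [a_lt_m|m_le_a] := ltnP a m.
  by rewrite gpow_lt_m // mulnDl -mulnDr modnMr.
by rewrite gpow_ge_m ?m_le_a // oddD addbb.
Qed.

Lemma gpow_cases a k : a < m + m ->
  [|| gpow n a k == a, gpow n a k == 0 | (a < m) && (gpow n a k < m)].
Proof.
move=> a_lt_2m; have [a_lt_m|m_le_a] := ltnP a m.
  by rewrite gpow_lt_m // ltn_pmod ?gm_gt0 ?orbT.
by rewrite gpow_ge_m ?m_le_a //; case: (odd k); rewrite eqxx ?orbT.
Qed.

Definition padjb (x y : nat) : bool :=
  (x != y) && [|| x == 0, y == 0 | (x < m) && (y < m)].

Lemma padjP (u v : vtx n) : padj u v <-> padjb u v.
Proof.
have u_lt : (u : nat) < m + m by rewrite -card_vtx ltn_ord.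
have v_lt : (v : nat) < m + m by rewrite -card_vtx ltn_ord.
have m2_gt0 : 0 < m + m by rewrite addn_gt0 gm_gt0.
rewrite /padjb; split.
  move=> [neq_uv [k [_ /= pw]]].
  have neq_val : (u : nat) != v by apply/eqP => /val_inj.
  move: neq_val (gpow_cases k u_lt) (gpow_cases k v_lt).
  by case: pw => ->; lia.
move=> /andP [neq_uv adj]; split; first by move=> eq_uv; rewrite eq_uv eqxx in neq_uv.
case/or3P: adj => [/eqP u0|/eqP v0|/andP [u_lt_m v_lt_m]].
- by exists (m + m); split; last by right => /=; rewrite u0 gpow_double_m.
- by exists (m + m); split; last by left => /=; rewrite v0 gpow_double_m.
- have [k [k_gt0 pw]] := pfactor_mul_modn_chain (e := n.-1) (isT : prime 2) u_lt_m v_lt_m.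
  by exists k; split; last by rewrite !gpow_lt_m.
Qed.

Definition vtx0 : vtx n := Ordinal (expn_gt0 2 n).

Lemma padj_vtx0 (v : vtx n) : v <> vtx0 -> padj vtx0 v.
Proof.
move=> v_neq0; apply/padjP; rewrite /padjb eqxx andbT eq_sym.
by apply: contra_notN v_neq0 => /eqP v0; apply: val_inj.
Qed.

Lemma pdist_eq1_padjb (u v : vtx n) : pdist_eq u v 1 <-> padjb u v.
Proof. by rewrite pdist_eq1 padjP. Qed.

Lemma pdist_eq2_padjb (u v : vtx n) :
  pdist_eq u v 2 <-> ((u : nat) != v) && ~~ padjb u v.
Proof.
rewrite (pdist_eq2_universal _ _ padj_vtx0) padjP; split.
  by move=> [neq_uv /negP nadj]; rewrite nadj andbT; apply/eqP => /val_inj.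
by move=> /andP [/eqP neq_uv /negP nadj]; split => // eq_uv; rewrite eq_uv in neq_uv.
Qed.

Lemma sum_vtx_halves (F : nat -> nat) :
  \sum_(j < 2 ^ n) F j = \sum_(j < m) F j + \sum_(j < m) F (m + j).
Proof. by rewrite card_vtx big_split_ord. Qed.

Lemma sum_ord_id : \sum_(j < m) j = 'C(m, 2).
Proof. by rewrite -bin2_sum big_mkord. Qed.

Lemma dis1 : dis n 1 = 'C(m, 2) + m.
Proof.
rewrite (dis_sum pdist_eq1_padjb) sum_vtx_halves -sum_ord_id.
have m_gt0 := gm_gt0; have vtx_eq := card_vtx.
congr (_ + _).
  apply: eq_bigr => j _; rewrite /row_count.
  rewrite (eq_bigr (fun i : 'I_(2 ^ n) => ((0 <= i) && (i < j) : nat))) => [|i _].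
    by rewrite sum_ord_interval; have := ltn_ord j; lia.
  by rewrite /padjb; have := ltn_ord j; lia.
rewrite (eq_bigr (fun=> 1)) => [|j _]; first by rewrite sum_nat_const card_ord muln1.
rewrite /row_count (eq_bigr (fun i : 'I_(2 ^ n) => ((0 <= i) && (i < 1) : nat))) => [|i _].
  by rewrite sum_ord_interval; lia.
by rewrite /padjb; have := ltn_ord j; lia.
Qed.

Lemma dis2 : dis n 2 = m * m.-1 + 'C(m, 2).
Proof.
rewrite (@dis_sum 2 (fun x y => (x != y) && ~~ padjb x y) pdist_eq2_padjb) sum_vtx_halves.
have m_gt0 := gm_gt0; have vtx_eq := card_vtx.
rewrite big1 ?add0n => [|j _]; last first.
  by rewrite /row_count big1 // => i _; rewrite /padjb; have := ltn_ord j; lia.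
rewrite (eq_bigr (fun j : 'I_m => m.-1 + j)) => [|j _].
  by rewrite big_split sum_nat_const card_ord mulnC sum_ord_id.
rewrite /row_count (eq_bigr (fun i : 'I_(2 ^ n) => ((1 <= i) && (i < m + j) : nat))) => [|i _].
  by rewrite sum_ord_interval; have := ltn_ord j; lia.
by rewrite /padjb; have := ltn_ord j; lia.
Qed.

End PowerGraph.

Lemma bin2_mul2 k : 'C(k, 2) * 2 = k * k.-1.
Proof. by rewrite -[X in _ * X]/(2`!) bin_ffact ffactnS ffactn1. Qed.

Theorem mainTheorem3 (n : nat) (hn : 3 <= n) :
  [/\ dis n 0 = 2 ^ n,
      dis n 1 = 2 ^ n.-1 * (2 ^ n.-1 + 1) %/ 2
    & dis n 2 = 3 * 2 ^ n.-1 * (2 ^ n.-1 - 1) %/ 2].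
Proof.
have n_gt1 : 1 < n by apply: ltnW.
have := bin2_mul2 (gm n); rewrite (dis1 n_gt1) (dis2 n_gt1) /gm.
set m := 2 ^ n.-1 => bin2m.
split; first exact: dis0.
  by rewrite (_ : m * (m + 1) = ('C(m, 2) + m) * 2) ?mulnK //; nia.
by rewrite (_ : 3 * m * (m - 1) = (m * m.-1 + 'C(m, 2)) * 2) ?mulnK //; nia.
Qed.
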